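(* Let $(X,d)$ be a metric space, $p\in X$, and define $\mu_p(x,y)=d(x,y)+\sqrt{d(x,p)d(y,p)}$ for $x,y\in X$. Let $x,y,z\in X$. If $$\max\{\mu_p(x,z),\mu_p(y,z)\}\geq K\min\{\mu_p(x,z),\mu_p(y,z)\}$$ for some $K>3$, then $$\mu_p(x,z)+\mu_p(y,z)\leq \frac{3(K+3)}{2(K-3)}\,d(x,y).$$ *)

From Stdlib Require Export Reals.
Open Scope R_scope.

Definition is_metric {X : Type} (d : X -> X -> R) : Prop :=
  (forall x y, 0 <= d x y) /\
  (forall x y, d x y = 0 <-> x = y) /\
  (forall x y, d x y = d y x) /\
  (forall x y z, d x z <= d x y + d y z).

Definition mu {X : Type} (d : X -> X -> R) (p x y : X) : R :=
  d x y + sqrt (d x p * d y p).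

From Stdlib Require Import Reals Lra Psatz.
Open Scope R_scope.

(* Since sqrt d is again a metric, sqrt d(x,p) <= sqrt d(x,y) + sqrt d(y,p); with
   AM-GM this yields the quasi-triangle inequality
   mu(x,z) <= 3/2 (d(x,y) + mu(y,z)).  If mu(x,z) >= K mu(y,z), this bounds mu(x,z),
   hence mu(x,z) + mu(y,z), by a multiple of d(x,y) as soon as K > 3/2; the
   constant 3(K+3)/(2(K-3)) is a weakening of the sharper 3(K+1)/(2K-3). *)

Lemma sqrt_add_le (u v : R) : 0 <= u -> 0 <= v -> sqrt (u + v) <= sqrt u + sqrt v.
Proof.
  intros hu hv.
  pose proof (sqrt_pos u); pose proof (sqrt_pos v).
  rewrite <- (sqrt_Rsqr (sqrt u + sqrt v)) by lra.
  apply sqrt_le_1_alt; unfold Rsqr.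
  rewrite <- (sqrt_sqrt u hu) at 1; rewrite <- (sqrt_sqrt v hv) at 1.
  nra.
Qed.

Lemma sqr_le_mul_add (b c v : R) :
  0 <= b -> 0 <= c -> 0 <= v -> c * c <= b * b + v -> c * c <= b * c + v.
Proof.
  intros hb hc hv hcb.
  destruct (Rle_dec c b) as [hle | hgt].
  - assert (0 <= c * (b - c)) by (apply Rmult_le_pos; lra); nra.
  - assert (0 <= b * (c - b)) by (apply Rmult_le_pos; lra); nra.
Qed.

Lemma sum_le_of_quasi_triangle (M m t K : R) :
  3 < K -> 0 <= m -> M <= 3/2 * (t + m) -> K * m <= M ->
  M + m <= 3 * (K + 3) / (2 * (K - 3)) * t.
Proof.
  intros hK hm hM hMK.
  assert (hMt : (2 * K - 3) * M <= 3 * K * t) by nra.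
  assert (hsum : K * (M + m) <= (K + 1) * M) by nra.
  assert (ht : 0 <= t) by nra.
  apply (Rmult_le_reg_l (2 * K * (K - 3))); [nra |].
  replace (2 * K * (K - 3) * (3 * (K + 3) / (2 * (K - 3)) * t))
    with (3 * K * (K + 3) * t) by (field; lra).
  nra.
Qed.

Section QuasiMetric.

Context {X : Type} (d : X -> X -> R) (p : X).
Hypothesis hd : is_metric d.

Lemma metric_ge0 (x y : X) : 0 <= d x y.
Proof. exact (proj1 hd x y). Qed.

Lemma metric_sym (x y : X) : d x y = d y x.
Proof. exact (proj1 (proj2 (proj2 hd)) x y). Qed.

Lemma metric_triangle (x y z : X) : d x z <= d x y + d y z.
Proof. exact (proj2 (proj2 (proj2 hd)) x y z). Qed.

Lemma sqrt_dist_triangle (x y z : X) : sqrt (d x z) <= sqrt (d x y) + sqrt (d y z).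
Proof.
  apply (Rle_trans _ (sqrt (d x y + d y z))).
  - apply sqrt_le_1_alt, metric_triangle.
  - apply sqrt_add_le; apply metric_ge0.
Qed.

Lemma mu_ge0 (x y : X) : 0 <= mu d p x y.
Proof.
  unfold mu; pose proof (metric_ge0 x y); pose proof (sqrt_pos (d x p * d y p)); lra.
Qed.

Lemma mu_quasi_triangle (x y z : X) : mu d p x z <= 3/2 * (d x y + mu d p y z).
Proof.
  unfold mu; rewrite !sqrt_mult_alt by apply metric_ge0.
  set (a := sqrt (d x p)); set (b := sqrt (d y p)); set (c := sqrt (d z p)).
  set (s := sqrt (d x y)).
  assert (hs : s * s = d x y) by apply sqrt_sqrt, metric_ge0.
  assert (ha : a <= s + b) by apply sqrt_dist_triangle.
  assert (hcb : c * c <= b * c + d y z).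
  { apply sqr_le_mul_add; try apply sqrt_pos; try apply metric_ge0.
    unfold b, c; rewrite !sqrt_sqrt by apply metric_ge0.
    rewrite (metric_sym y z); pose proof (metric_triangle z y p); lra. }
  assert (hxz := metric_triangle x y z).
  assert (hac : a * c <= s * c + b * c).
  { assert (0 <= c) by apply sqrt_pos; nra. }
  assert (hsc : 2 * (s * c) <= s * s + c * c).
  { assert (0 <= (s - c) * (s - c)) by apply Rle_0_sqr; nra. }
  lra.
Qed.

Lemma mu_sum_le_of_ratio (K : R) (x y z : X) :
  3 < K -> K * mu d p y z <= mu d p x z ->
  mu d p x z + mu d p y z <= 3 * (K + 3) / (2 * (K - 3)) * d x y.
Proof.
  intros hK hratio.
  apply sum_le_of_quasi_triangle; auto using mu_ge0, mu_quasi_triangle.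
Qed.

End QuasiMetric.

Theorem lemma3p2 (X : Type) (d : X -> X -> R) (hd : is_metric d)
  (p x y z : X) (K : R) (hK : 3 < K)
  (hmax : Rmax (mu d p x z) (mu d p y z) >= K * Rmin (mu d p x z) (mu d p y z)) :
  mu d p x z + mu d p y z <= 3 * (K + 3) / (2 * (K - 3)) * d x y.
Proof.
  unfold Rmax, Rmin in hmax.
  destruct (Rle_dec (mu d p x z) (mu d p y z)).
  - rewrite Rplus_comm, (metric_sym _ hd x y).
    apply mu_sum_le_of_ratio; auto; lra.
  - apply mu_sum_le_of_ratio; auto; lra.
Qed.
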